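(* For every $n\ge 2$, $N(n)$ is even.
   Context: A semi-Heyting algebra is an algebra $\langle L,\vee,\wedge,\to,0,1\rangle$ such that: (SH1) $\langle L,\vee,\wedge,0,1\rangle$ is a bounded lattice with least element $0$ and greatest element $1$; (SH2) $x\wedge(x\to y)=x\wedge y$; (SH3) $x\wedge(y\to z)=x\wedge[(x\wedge y)\to(x\wedge z)]$; (SH4) $x\to x=1$, for all $x,y,z\in L$. For $n\ge 1$, $C_n$ denotes the chain $a_0<a_1<\cdots<a_{n-1}$ with $0=a_0$, $1=a_{n-1}$ (for $n=1$, $0=1$), with $\wedge=\min$, $\vee=\max$. $N(n)$ denotes the number of binary operations $\to$ on $C_n$ such that $\langle C_n,\vee,\wedge,\to,0,1\rangle$ is a semi-Heyting algebra. *)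

From mathcomp Require Import all_boot.
Set Implicit Arguments. Unset Strict Implicit. Unset Printing Implicit Defensive.

(* The chain C_n is modelled by the ordinal type 'I_n (elements a_0 < ... < a_{n-1},
   with a_i represented by i). Meet = min, join = max, 0 = a_0, 1 = a_{n-1}. *)
Definition cmeet (n : nat) (x y : 'I_n) : 'I_n := if (x <= y)%N then x else y.
Definition cjoin (n : nat) (x y : 'I_n) : 'I_n := if (x <= y)%N then y else x.

Definition is_top (n : nat) (x : 'I_n) : bool := val x == n.-1.

Definition binop (n : nat) := {ffun 'I_n * 'I_n -> 'I_n}.

(* (SH2)-(SH4); (SH1) holds automatically for the chain C_n. *)
Definition semiHeyting (n : nat) (imp : binop n) : bool :=
  [&& [forall x : 'I_n, forall y : 'I_n,
        cmeet x (imp (x, y)) == cmeet x y],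
      [forall x : 'I_n, forall y : 'I_n, forall z : 'I_n,
        cmeet x (imp (y, z)) == cmeet x (imp (cmeet x y, cmeet x z))] &
      [forall x : 'I_n, is_top (imp (x, x))]].

Definition N (n : nat) : nat := #|[pred imp : binop n | semiHeyting imp]|.

From mathcomp Require Import all_boot perm.

Set Implicit Arguments.
Unset Strict Implicit.
Unset Printing Implicit Defensive.

(* (SH2) with x = a_{n-2}, y = 1 forces a_{n-2} -> 1 to be a_{n-2} or 1.
   Exchanging these two values keeps (SH2)-(SH4): a meet x /\ _ can only tell
   them apart when x = 1, and for x = 1 axiom (SH3) is trivial while (SH2) and
   (SH4) never evaluate -> at (a_{n-2}, 1). So the exchange is a fixed-point-free
   involution of the semi-Heyting implications on C_n, and N(n) is even. *)

Lemma even_card_involution (T : finType) (A B : {set T}) (f : T -> T) :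
    involutive f ->
    {in A, forall x, (f x \in A) && ((f x \in B) != (x \in B))} ->
  ~~ odd #|A|.
Proof.
move=> fK f_switch.
have imA : A :\: B = f @: (A :&: B).
  apply/setP => x; rewrite !inE; apply/andP/imsetP => [[xNB xA]|[y]].
  - exists (f x); last by rewrite fK.
    have /andP[fxA] := f_switch x xA.
    by rewrite inE fxA (negbTE xNB); case: (f x \in B).
  - rewrite inE => /andP[yA yB] ->.
    have /andP[fyA] := f_switch y yA.
    by rewrite yB fyA; case: (f y \in B).
rewrite -(cardsID B A) imA card_imset ?addnn ?odd_double //.
exact: can_inj fK.
Qed.

Lemma cmeet_l (n : nat) (x y : 'I_n) : (x <= y)%N -> cmeet x y = x.
Proof. by rewrite /cmeet => ->. Qed.

Lemma cmeet_r (n : nat) (x y : 'I_n) : (y <= x)%N -> cmeet x y = y.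
Proof.
rewrite /cmeet leq_eqVlt => /orP[/eqP/val_inj ->|yx]; first by rewrite leqnn.
by rewrite leqNgt yx.
Qed.

Lemma cmeet_eq_l (n : nat) (x y : 'I_n) : (cmeet x y == x) = (x <= y)%N.
Proof. by rewrite /cmeet; case: leqP => yx; rewrite ?eqxx // -val_eqE ltn_eqF. Qed.

Section Flip.

Variable m : nat.
Local Notation n := m.+2.

Definition penult : 'I_n := Ordinal (leqnSn m.+1).
Local Notation top := (@ord_max m.+1).

Lemma penult_neq_top : penult != top.
Proof. by rewrite -val_eqE /= eqn_leq ltnn andbF. Qed.

Lemma le_penult (v : 'I_n) : (penult <= v)%N = (v == penult) || (v == top).
Proof.
rewrite -!val_eqE /= leq_eqVlt [(m == _)]eq_sym.
by rewrite [(_ == m.+1)%N]eqn_leq -[(v <= m.+1)%N]ltnS ltn_ord.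
Qed.

Lemma cmeet_topl (y : 'I_n) : cmeet top y = y.
Proof. by apply: cmeet_r; rewrite -ltnS ltn_ord. Qed.

Lemma cmeet_tperm (x v : 'I_n) :
  x != top -> cmeet x (tperm penult top v) = cmeet x v.
Proof.
move=> xNtop; have x_le : (x <= m)%N.
  by move: (ltn_ord x) xNtop; rewrite ltnS leq_eqVlt -val_eqE /=; case: eqP.
have x_le_top : (x <= top)%N by rewrite (leq_trans x_le).
by case: tpermP => [->|->|//]; rewrite !cmeet_l.
Qed.

Definition flip (imp : binop n) : binop n :=
  [ffun p => if p == (penult, top) then tperm penult top (imp p) else imp p].

Lemma flipK : involutive flip.
Proof. by move=> imp; apply/ffunP => p; rewrite !ffunE; case: ifP => ->; rewrite ?tpermK. Qed.

Lemma cmeet_flip (imp : binop n) x p :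
  x != top -> cmeet x (flip imp p) = cmeet x (imp p).
Proof. by move=> xNtop; rewrite ffunE; case: ifP => // _; rewrite cmeet_tperm. Qed.

Lemma semiHeyting_flip (imp : binop n) : semiHeyting imp -> semiHeyting (flip imp).
Proof.
case/and3P=> SH2 SH3 SH4; apply/and3P; split.
- apply/forallP=> x; apply/forallP=> y; have /forallP/(_ y) := forallP SH2 x.
  rewrite ffunE; case: ifP => // /eqP[-> _].
  by rewrite cmeet_tperm // penult_neq_top.
- apply/forallP=> x; apply/forallP=> y; apply/forallP=> z.
  have [->|xNtop] := eqVneq x top; first by rewrite !cmeet_topl.
  by rewrite !cmeet_flip //; apply: (forallP (forallP (forallP SH3 x) y)).
- apply/forallP=> x; rewrite ffunE.
  case: ifP => [/eqP[x_pen x_top]|_]; last exact: forallP SH4 x.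
  by move: penult_neq_top; rewrite -x_pen x_top eqxx.
Qed.

Lemma semiHeyting_penult_top (imp : binop n) :
  semiHeyting imp -> (imp (penult, top) == penult) || (imp (penult, top) == top).
Proof.
case/and3P=> SH2 _ _; have /forallP/(_ top) := forallP SH2 penult.
by rewrite [cmeet penult top]cmeet_l ?leqnSn // cmeet_eq_l le_penult.
Qed.

Lemma flip_switches_penult (imp : binop n) : semiHeyting imp ->
  (flip imp (penult, top) == penult) != (imp (penult, top) == penult).
Proof.
have top_neq_penult : (top == penult) = false by rewrite eq_sym (negbTE penult_neq_top).
move/semiHeyting_penult_top; rewrite ffunE eqxx.
by case/orP => /eqP ->; rewrite ?tpermL ?tpermR eqxx top_neq_penult.
Qed.

End Flip.

Theorem mainTheorem4 (n : nat) : (2 <= n)%N -> ~~ odd (N n).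
Proof.
case: n => [|[|m]] // _; rewrite /N -cardsE.
apply: (@even_card_involution _ _ [set imp : binop m.+2 | imp (penult m, ord_max) == penult m]
  _ (@flipK m)) => imp; rewrite !inE => SH.
by rewrite semiHeyting_flip // flip_switches_penult.
Qed.
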